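(* Let $(C,S)$ be a right-angled Coxeter system and $\rho\colon C\to\mathrm{SL}^{\pm}(|S|,\mathbb{R})$ a simplicial representation with fully nondegenerate Cartan matrix. For $T\subset S$ let $V_T=\mathrm{span}\{v_s:s\in T\}$ and $V_T^\perp=\bigcap_{s\in T}\ker(\alpha_s)$. Then $V=V_T\oplus V_T^\perp$ is a $C(T)$-invariant decomposition, and the representation $\rho_T\colon C(T)\to\mathrm{SL}^{\pm}(V_T)$ given by the restriction of $\rho|_{C(T)}$ to $V_T$ is isomorphic to a simplicial representation of $(C(T),T)$.
   Context: $S=\{s_1,\dots,s_n\}$, $V=\mathbb{R}^n$, $C(T)=\langle T\rangle$. A Cartan matrix is a real $n\times n$ matrix $A$ with $A_{ii}=2$; $A_{ij}=0$ if $s_i,s_j$ commute ($i\ne j$); $A_{ij}<0$ and $A_{ij}A_{ji}\ge4$ otherwise. With $\alpha_{s_i}=e^i$ (dual basis) and $v_{s_i}=\sum_kA_{ki}e_k$, the simplicial representation is $\rho(s_i)=\mathrm{id}-v_{s_i}\otimes\alpha_{s_i}$. A simplicial representation of $(C(T),T)$ is defined in the same way from a Cartan matrix of $(C(T),T)$. $A$ is fully nondegenerate if all its principal minors are nonzero. *)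

From HB Require Import structures.
From mathcomp Require Import all_boot all_order all_algebra.
Set Implicit Arguments. Unset Strict Implicit. Unset Printing Implicit Defensive.
Import Order.TTheory GRing.Theory Num.Theory.
Local Open Scope ring_scope.

(* A right-angled Coxeter system (C,S) with S = {s_0,...,s_{n-1}} is encoded by
   its commutation graph [G : rel 'I_n]: G i j holds iff s_i and s_j commute
   (i <> j, m_ij = 2); otherwise (i <> j) m_ij = infinity. *)
Definition rac_graph (n : nat) (G : rel 'I_n) : Prop :=
  (forall i, ~~ G i i) /\ (forall i j, G i j = G j i).

Definition is_cartan (R : realFieldType) (n : nat) (G : rel 'I_n) (A : 'M[R]_n) : Prop :=
  forall i j,
    (i = j -> A i j = 2) /\
    (i <> j -> G i j -> A i j = 0) /\
    (i <> j -> ~~ G i j -> A i j < 0 /\ 4 <= A i j * A j i).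

(* Principal submatrix of A on the index set I (indices listed increasingly). *)
Definition principal_submx (R : realFieldType) (n : nat) (A : 'M[R]_n) (I : {set 'I_n})
  : 'M[R]_#|I| :=
  \matrix_(a < #|I|, b < #|I|) A (enum_val a) (enum_val b).

Definition fully_nondegenerate (R : realFieldType) (n : nat) (A : 'M[R]_n) : Prop :=
  forall I : {set 'I_n}, \det (principal_submx A I) != 0.

Definition induced_graph (n : nat) (G : rel 'I_n) (T : {set 'I_n}) : rel 'I_#|T| :=
  fun a b => G (enum_val a) (enum_val b).

(* Simplicial representation: acting on column vectors of R^n,
   rho(s_i) = id - v_{s_i} (x) alpha_{s_i}, with alpha_{s_i} = e^i and
   v_{s_i} = sum_k A_ki e_k = i-th column of A. *)
Definition simp_rep (R : realFieldType) (n : nat) (A : 'M[R]_n) (i : 'I_n) : 'M[R]_n :=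
  1%:M - col i A *m row i 1%:M.

Definition vs (R : realFieldType) (n : nat) (A : 'M[R]_n) (i : 'I_n) : 'cV[R]_n := col i A.

Definition in_VT (R : realFieldType) (n : nat) (A : 'M[R]_n) (T : {set 'I_n}) (x : 'cV[R]_n)
  : Prop :=
  exists c : 'I_n -> R, x = \sum_(i in T) c i *: vs A i.

Definition in_VTperp (R : realFieldType) (n : nat) (T : {set 'I_n}) (x : 'cV[R]_n) : Prop :=
  forall i, i \in T -> x i 0 = 0.

(* The a-th element (in increasing order) of T, i.e. the generator of C(T)
   indexed by a : 'I_#|T|. *)
Definition tgen (n : nat) (T : {set 'I_n}) (a : 'I_#|T|) : 'I_n := enum_val a.
Arguments induced_graph {n} G T.

From HB Require Import structures.
From mathcomp Require Import all_boot all_order all_algebra.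
Import Order.TTheory GRing.Theory Num.Theory.
Set Implicit Arguments. Unset Strict Implicit. Unset Printing Implicit Defensive.
Local Open Scope ring_scope.

(* Let P be the matrix whose columns are the v_s, s in T. The rows of P indexed
   by T form the principal submatrix A_T, which is invertible by full
   nondegeneracy. So psi := P A_T^-1 maps R^T isomorphically onto V_T and its
   T-rows form the identity: x - psi (x|_T) lies in V_T^perp for every x, which
   gives the direct sum. As rho(s) x = x - x_s v_s, both summands are
   invariant. Finally psi maps the column of A_T indexed by s to v_s and its
   row indexed by s is e^s, so it intertwines rho(s) with the simplicial
   representation of the Cartan matrix A_T. *)

Lemma simp_repE (R : realFieldType) (n : nat) (A : 'M[R]_n) (i : 'I_n)
    (x : 'cV[R]_n) :
  simp_rep A i *m x = x - x i 0 *: vs A i.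
Proof.
rewrite /simp_rep mulmxBl mul1mx -mulmxA -row_mul mul1mx.
by rewrite [row i x]mx11_scalar mul_mx_scalar /vs !mxE.
Qed.

Lemma is_cartan_principal_submx (R : realFieldType) (n : nat) (G : rel 'I_n)
    (A : 'M[R]_n) (T : {set 'I_n}) :
  is_cartan G A -> is_cartan (induced_graph G T) (principal_submx A T).
Proof.
move=> cartanA a b; have [diagA [commA noncommA]] := cartanA (tgen a) (tgen b).
rewrite /principal_submx /induced_graph !mxE; split; [|split].
- by move=> eq_ab; apply: diagA; rewrite eq_ab.
- by move=> neq_ab; apply: commA => /enum_val_inj.
- by move=> neq_ab; apply: noncommA => /enum_val_inj.
Qed.

Section VT.

Variables (R : realFieldType) (n : nat) (A : 'M[R]_n) (T : {set 'I_n}).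

Local Notation B := (principal_submx A T).

Definition VT_basis : 'M[R]_(n, #|T|) := colsub (@tgen _ T) A.

Lemma col_VT_basis (a : 'I_#|T|) : col a VT_basis = vs A (tgen a).
Proof. exact: col_colsub. Qed.

Lemma rowsub_VT_basis : rowsub (@tgen _ T) VT_basis = B.
Proof. by rewrite -mxsubrc. Qed.

Lemma in_VTP (x : 'cV[R]_n) : in_VT A T x <-> exists w, x = VT_basis *m w.
Proof.
have sum_VT_basis (c : 'I_n -> R) :
    \sum_(i in T) c i *: vs A i = VT_basis *m \col_a c (tgen a).
  apply/matrixP => j z; rewrite big_enum_val !mxE summxE; apply: eq_bigr => a _.
  by rewrite !mxE mulrC.
split=> [[c ->]|[w ->]]; first by eexists; apply: sum_VT_basis.
exists (fun i => \sum_(b | tgen b == i) w b 0); rewrite sum_VT_basis.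
congr (_ *m _); apply/matrixP => a z; rewrite mxE (ord1 z).
by rewrite (big_pred1 a) // => b; rewrite /= (inj_eq enum_val_inj).
Qed.

Lemma in_VTperpP (x : 'cV[R]_n) : in_VTperp T x <-> rowsub (@tgen _ T) x = 0.
Proof.
split=> [x_perp | /matrixP x0 i Ti].
  by apply/matrixP => a z; rewrite (ord1 z) !mxE; apply/x_perp/enum_valP.
by rewrite -(enum_rankK_in Ti Ti); have := x0 (enum_rank_in Ti i) 0; rewrite !mxE.
Qed.

Lemma simp_rep_VT (i : 'I_n) (x : 'cV[R]_n) :
  i \in T -> in_VT A T x -> in_VT A T (simp_rep A i *m x).
Proof.
move=> Ti /in_VTP [w ->]; apply/in_VTP; rewrite simp_repE.
rewrite -(enum_rankK_in Ti Ti) -col_VT_basis colE scalemxAr -mulmxBr.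
by eexists.
Qed.

Lemma simp_rep_VTperp (i : 'I_n) (x : 'cV[R]_n) :
  i \in T -> in_VTperp T x -> in_VTperp T (simp_rep A i *m x).
Proof.
by move=> Ti x_perp j Tj; rewrite simp_repE !mxE (x_perp i Ti) mul0r subr0 x_perp.
Qed.

Hypothesis B_unit : B \in unitmx.

Definition VT_embedding : 'M[R]_(n, #|T|) := VT_basis *m invmx B.

Lemma VT_embedding_mulB : VT_embedding *m B = VT_basis.
Proof. by rewrite -mulmxA mulVmx // mulmx1. Qed.

Lemma rowsub_VT_embedding (p : nat) (y : 'M[R]_(#|T|, p)) :
  rowsub (@tgen _ T) (VT_embedding *m y) = y.
Proof. by rewrite -!mul_rowsub_mx rowsub_VT_basis mulmxV // mul1mx. Qed.

Lemma VT_embedding_in_VT (y : 'cV[R]_#|T|) : in_VT A T (VT_embedding *m y).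
Proof. by apply/in_VTP; exists (invmx B *m y); rewrite mulmxA. Qed.

Lemma VT_embedding_inj (y : 'cV[R]_#|T|) : VT_embedding *m y = 0 -> y = 0.
Proof. by move=> y0; rewrite -(rowsub_VT_embedding y) y0 rowsubE mulmx0. Qed.

Lemma VT_embedding_onto (x : 'cV[R]_n) :
  in_VT A T x -> exists y, x = VT_embedding *m y.
Proof.
by move=> /in_VTP [w ->]; exists (B *m w); rewrite mulmxA VT_embedding_mulB.
Qed.

Lemma VT_VTperp_sum (x : 'cV[R]_n) :
  exists y z, in_VT A T y /\ in_VTperp T z /\ x = y + z.
Proof.
set y := VT_embedding *m rowsub (@tgen _ T) x.
exists y, (x - y); split; first exact: VT_embedding_in_VT.
split; last by rewrite addrC subrK.
apply/in_VTperpP; rewrite rowsubE mulmxBr -!rowsubE rowsub_VT_embedding.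
exact: subrr.
Qed.

Lemma VT_VTperp_cap (x : 'cV[R]_n) : in_VT A T x -> in_VTperp T x -> x = 0.
Proof.
move=> /VT_embedding_onto [y ->] /in_VTperpP.
by rewrite rowsub_VT_embedding => ->; rewrite mulmx0.
Qed.

Lemma VT_embedding_intertwines (a : 'I_#|T|) :
  simp_rep A (tgen a) *m VT_embedding = VT_embedding *m simp_rep B a.
Proof.
rewrite /simp_rep mulmxBl mul1mx mulmxBr mulmx1; congr (_ - _).
have row_emb : row (tgen a) VT_embedding = row a 1%:M.
  by rewrite -row_rowsub -[VT_embedding]mulmx1 rowsub_VT_embedding.
rewrite -mulmxA -row_mul mul1mx row_emb mulmxA; congr (_ *m _).
rewrite -/(vs A (tgen a)) -col_VT_basis [col a B]colE mulmxA.
by rewrite VT_embedding_mulB -colE.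
Qed.

End VT.

Theorem lemma4p8 (R : realFieldType) (n : nat) (G : rel 'I_n) (A : 'M[R]_n)
    (T : {set 'I_n}) :
  rac_graph G -> is_cartan G A -> fully_nondegenerate A ->
  (* V = V_T (+) V_T^perp *)
  ((forall x : 'cV[R]_n, exists y z, in_VT A T y /\ in_VTperp T z /\ x = y + z) /\
   (forall x : 'cV[R]_n, in_VT A T x -> in_VTperp T x -> x = 0)) /\
  (* the decomposition is C(T)-invariant (C(T) is generated by T) *)
  (forall i, i \in T -> forall x : 'cV[R]_n,
     (in_VT A T x -> in_VT A T (simp_rep A i *m x)) /\
     (in_VTperp T x -> in_VTperp T (simp_rep A i *m x))) /\
  (* rho_T is isomorphic to a simplicial representation of (C(T),T) *)
  (exists (A' : 'M[R]_#|T|) (psi : 'M[R]_(n, #|T|)),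
     is_cartan (induced_graph G T) A' /\
     (forall y : 'cV[R]_#|T|, in_VT A T (psi *m y)) /\
     (forall y : 'cV[R]_#|T|, psi *m y = 0 -> y = 0) /\
     (forall x : 'cV[R]_n, in_VT A T x -> exists y, x = psi *m y) /\
     (forall a : 'I_#|T|, simp_rep A (tgen a) *m psi = psi *m simp_rep A' a)).
Proof.
move=> _ cartanA nondegA.
have B_unit : principal_submx A T \in unitmx by rewrite unitmxE unitfE nondegA.
split; first by split; [exact: VT_VTperp_sum | exact: VT_VTperp_cap].
split; first by move=> i Ti x; split; [exact: simp_rep_VT | exact: simp_rep_VTperp].
exists (principal_submx A T), (VT_embedding A T).
split; first exact: is_cartan_principal_submx.
split; first exact: VT_embedding_in_VT.
split; first exact: VT_embedding_inj.
split; first exact: VT_embedding_onto.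
exact: VT_embedding_intertwines.
Qed.
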